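(* Let $P$ be a power quandle and $G=\mathrm{Gr}(P)$. Then $\mathrm{Gr}(\mathrm{Pq}(G))\cong G\times\mathrm{A}(G)$ as groups, where $\mathrm{A}(G)$ is the kernel of $\epsilon\colon\mathrm{Gr}(\mathrm{Pq}(G))\to G$.
   Context: A power quandle $(P,\rhd,\pi,e)$ consists of a set $P$, a binary operation $\rhd$, an element $e$, and maps $\pi^n\colon P\to P$ ($n\in\mathbb{Z}$) satisfying: each $\lambda_a\colon b\mapsto a\rhd b$ is bijective and $a\rhd(b\rhd c)=(a\rhd b)\rhd(a\rhd c)$; $a\rhd a=a$; $e\rhd b=b$, $a\rhd e=e$; $\pi^1=\mathrm{id}$, $\pi^m\circ\pi^n=\pi^{mn}$; $\pi^0(a)=e$; $a\rhd\pi^n(b)=\pi^n(a\rhd b)$; $\pi^n(a)\rhd b=\lambda_a^n(b)$. For a group $G$, $\mathrm{Pq}(G)$ is the power quandle with $a\rhd b=aba^{-1}$, $\pi^n(a)=a^n$, unit the identity. For a power quandle $P$, $\mathrm{Gr}(P)$ is the group with generators $\sigma(a)$, $a\in P$, and relations $\sigma(a\rhd b)=\sigma(a)\sigma(b)\sigma(a)^{-1}$, $\sigma(\pi^n(a))=\sigma(a)^n$, $\sigma(e)=1$. For a group $G$, $\epsilon\colon\mathrm{Gr}(\mathrm{Pq}(G))\to G$ is the homomorphism with $\epsilon(\sigma(a))=a$. *)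

From Stdlib Require Import ZArith.
Set Implicit Arguments.

Record Group := MkGroup {
  gcar :> Type;
  gmul : gcar -> gcar -> gcar;
  gone : gcar;
  ginv : gcar -> gcar;
  gmulA : forall x y z, gmul x (gmul y z) = gmul (gmul x y) z;
  gmul1l : forall x, gmul gone x = x;
  gmul1r : forall x, gmul x gone = x;
  gmulVl : forall x, gmul (ginv x) x = gone;
  gmulVr : forall x, gmul x (ginv x) = gone
}.

Arguments gmul {g} _ _.
Arguments ginv {g} _.

Definition gpow {G : Group} (x : G) (n : Z) : G :=
  if (0 <=? n)%Z then Nat.iter (Z.to_nat n) (gmul x) (gone G)
  else Nat.iter (Z.to_nat (- n)) (gmul (ginv x)) (gone G).

Definition is_hom {G H : Group} (f : G -> H) : Prop :=
  forall x y, f (gmul x y) = gmul (f x) (f y).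

(** Power quandles.  Bijectivity of lambda_a is given by a two-sided inverse
    [qlinv a]; lambda_a^n for n in Z is iteration of lambda_a or its inverse. *)
Definition lam_pow {P : Type} (op linv : P -> P -> P) (a : P) (n : Z) (b : P) : P :=
  if (0 <=? n)%Z then Nat.iter (Z.to_nat n) (op a) b
  else Nat.iter (Z.to_nat (- n)) (linv a) b.

Record PowerQuandle := MkPQ {
  qcar :> Type;
  qop : qcar -> qcar -> qcar;
  qpi : Z -> qcar -> qcar;
  qe : qcar;
  qlinv : qcar -> qcar -> qcar;
  qlinvK : forall a b, qlinv a (qop a b) = b;
  qopK : forall a b, qop a (qlinv a b) = b;
  qdistr : forall a b c, qop a (qop b c) = qop (qop a b) (qop a c);
  qidem : forall a, qop a a = a;
  qe_l : forall b, qop qe b = b;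
  qe_r : forall a, qop a qe = qe;
  qpi1 : forall a, qpi 1%Z a = a;
  qpiM : forall m n a, qpi m (qpi n a) = qpi (m * n)%Z a;
  qpi0 : forall a, qpi 0%Z a = qe;
  qop_pi : forall n a b, qop a (qpi n b) = qpi n (qop a b);
  qpi_op : forall n a b, qop (qpi n a) b = lam_pow qop qlinv a n b
}.

Arguments qop {p} _ _.
Arguments qpi {p} _ _.
Arguments qlinv {p} _ _.

Definition gr_rel (X : Type) (op : X -> X -> X) (pi : Z -> X -> X) (e : X)
    {H : Group} (f : X -> H) : Prop :=
  (forall a b, f (op a b) = gmul (gmul (f a) (f b)) (ginv (f a))) /\
  (forall n a, f (pi n a) = gpow (f a) n) /\
  f e = gone H.

(** (G, sigma) is the group Gr with generators sigma(a), a in X, and the above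
    relations, characterized (up to isomorphism) by its universal property. *)
Definition IsGr (X : Type) (op : X -> X -> X) (pi : Z -> X -> X) (e : X)
    {G : Group} (sigma : X -> G) : Prop :=
  gr_rel op pi e sigma /\
  forall (H : Group) (f : X -> H), gr_rel op pi e f ->
    (exists phi : G -> H, is_hom phi /\ forall a, phi (sigma a) = f a) /\
    (forall phi1 phi2 : G -> H, is_hom phi1 -> is_hom phi2 ->
       (forall a, phi1 (sigma a) = phi2 (sigma a)) -> forall x, phi1 x = phi2 x).

Definition pq_op {G : Group} (a b : G) : G := gmul (gmul a b) (ginv a).
Definition pq_pi {G : Group} (n : Z) (a : G) : G := gpow a n.

(** K is isomorphic, as a group, to the direct product G x ker(eps), where
    ker(eps) = {x in K | eps x = 1} with the group law of K: given by a pair of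
    homomorphisms phi1 : K -> G, phi2 : K -> K with phi2 landing in ker(eps),
    such that x |-> (phi1 x, phi2 x) is a bijection K -> G x ker(eps). *)
Definition iso_prod_kernel {K G : Group} (eps : K -> G) : Prop :=
  exists (phi1 : K -> G) (phi2 : K -> K),
    is_hom phi1 /\ is_hom phi2 /\
    (forall x, eps (phi2 x) = gone G) /\
    (forall x y, phi1 x = phi1 y -> phi2 x = phi2 y -> x = y) /\
    (forall (g : G) (k : K), eps k = gone G -> exists x, phi1 x = g /\ phi2 x = k).

(* The map [tau o sigma : P -> K] satisfies the defining relations of [Gr(P)],
   so it extends to a homomorphism [s : G -> K], and [eps o s = id] because both
   sides agree on the generators [sigma a].  Conjugation in [K] is computed through [eps]:
   [x tau(h) x^-1 = tau(eps(x) h eps(x)^-1)], as one checks on the generators of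
   [K].  Hence the kernel of [eps] is central, and the split extension
   [ker eps -> K -> G] with central kernel is a direct product, via
   [x |-> (eps x, s(eps x)^-1 x)]. *)
From Stdlib Require Import ZArith ProofIrrelevance.
Set Implicit Arguments.

Arguments gmulA {g}.
Arguments gmul1l {g}.
Arguments gmul1r {g}.
Arguments gmulVl {g}.
Arguments gmulVr {g}.

Section GroupFacts.
Context {H : Group}.
Implicit Types x y z : H.

Lemma ginv_unique x y : gmul x y = gone H -> y = ginv x.
Proof.
  intro E. rewrite <- (gmul1l y), <- (gmulVl x), <- gmulA, E, gmul1r. reflexivity.
Qed.

Lemma ginvM x y : ginv (gmul x y) = gmul (ginv y) (ginv x).
Proof.
  symmetry; apply ginv_unique.
  rewrite <- gmulA, (gmulA y), gmulVr, gmul1l, gmulVr. reflexivity.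
Qed.

Lemma ginv1 : ginv (gone H) = gone H.
Proof. symmetry; apply ginv_unique, gmul1l. Qed.

Lemma gmulK x y : gmul (ginv x) (gmul x y) = y.
Proof. rewrite gmulA, gmulVl, gmul1l. reflexivity. Qed.

Lemma gmulKV x y : gmul x (gmul (ginv x) y) = y.
Proof. rewrite gmulA, gmulVr, gmul1l. reflexivity. Qed.

Lemma pq_opM x y z : pq_op (gmul x y) z = pq_op x (pq_op y z).
Proof. unfold pq_op. rewrite ginvM, !gmulA. reflexivity. Qed.

Lemma pq_op1 z : pq_op (gone H) z = z.
Proof. unfold pq_op. rewrite ginv1, gmul1l, gmul1r. reflexivity. Qed.

Lemma pq_opK x z : pq_op (ginv x) (pq_op x z) = z.
Proof. rewrite <- pq_opM, gmulVl. apply pq_op1. Qed.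

Lemma pq_opKV x z : pq_op x (pq_op (ginv x) z) = z.
Proof. rewrite <- pq_opM, gmulVr. apply pq_op1. Qed.

Lemma pq_op_mulr x y : gmul (pq_op x y) x = gmul x y.
Proof. unfold pq_op. rewrite <- gmulA, gmulVl, gmul1r. reflexivity. Qed.

Lemma commute_ginv x y : gmul x y = gmul y x -> gmul x (ginv y) = gmul (ginv y) x.
Proof.
  intro E. rewrite <- (gmulK y (gmul x (ginv y))), (gmulA y), <- E.
  rewrite <- gmulA, gmulVr, gmul1r. reflexivity.
Qed.

End GroupFacts.

Lemma hom_one {A B : Group} {f : A -> B} : is_hom f -> f (gone A) = gone B.
Proof.
  intro Hf. assert (E : f (gone A) = gmul (f (gone A)) (f (gone A))).
  { rewrite <- Hf, gmul1l; reflexivity. }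
  rewrite <- (gmulK (f (gone A)) (f (gone A))), <- E, gmulVl. reflexivity.
Qed.

Lemma hom_inv {A B : Group} {f : A -> B} : is_hom f -> forall x, f (ginv x) = ginv (f x).
Proof.
  intros Hf x. apply ginv_unique. rewrite <- Hf, gmulVr. exact (hom_one Hf).
Qed.

Lemma sig_eq {A : Type} (Q : A -> Prop) (x y : {a | Q a}) :
  proj1_sig x = proj1_sig y -> x = y.
Proof. destruct x, y; simpl; intros ->; f_equal; apply proof_irrelevance. Qed.

Section Subgroup.
Variables (K : Group) (Q : K -> Prop).
Hypothesis Q_mul : forall {x y}, Q x -> Q y -> Q (gmul x y).
Hypothesis Q_one : Q (gone K).
Hypothesis Q_inv : forall {x}, Q x -> Q (ginv x).

Definition subgroup : Group.
Proof.
  refine (@MkGroup {x | Q x}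
    (fun x y => exist _ (gmul (proj1_sig x) (proj1_sig y)) (Q_mul (proj2_sig x) (proj2_sig y)))
    (exist _ (gone K) Q_one)
    (fun x => exist _ (ginv (proj1_sig x)) (Q_inv (proj2_sig x))) _ _ _ _ _);
  intros; apply sig_eq; simpl.
  - apply gmulA.
  - apply gmul1l.
  - apply gmul1r.
  - apply gmulVl.
  - apply gmulVr.
Defined.

Lemma subgroup_gpow (y : subgroup) n : proj1_sig (gpow y n) = gpow (proj1_sig y) n.
Proof.
  assert (Iter : forall (u z : subgroup) m,
    proj1_sig (Nat.iter m (gmul u) z) = Nat.iter m (gmul (proj1_sig u)) (proj1_sig z)).
  { intros u z m; induction m as [|m IH]; [reflexivity|].
    change (proj1_sig (gmul u (Nat.iter m (gmul u) z))
            = gmul (proj1_sig u) (Nat.iter m (gmul (proj1_sig u)) (proj1_sig z))).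
    rewrite <- IH; reflexivity. }
  unfold gpow; destruct (0 <=? n)%Z; apply Iter.
Qed.

End Subgroup.

Arguments subgroup {K Q}.
Arguments subgroup_gpow {K Q Q_mul Q_one Q_inv}.

Section GrUniversal.
Variables (X : Type) (op : X -> X -> X) (pi : Z -> X -> X) (e : X).
Variables (K : Group) (tau : X -> K).
Hypothesis HK : IsGr op pi e tau.

Lemma Gr_ind (Q : K -> Prop) :
  (forall x y, Q x -> Q y -> Q (gmul x y)) -> Q (gone K) ->
  (forall x, Q x -> Q (ginv x)) -> (forall a, Q (tau a)) ->
  forall x, Q x.
Proof.
  intros Q_mul Q_one Q_inv Q_tau.
  (* Lift [tau] into the subgroup cut out by [Q]; projecting back is the
     identity by uniqueness of extensions. *)
  destruct HK as [[R_op [R_pi R_e]] U].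
  set (S := subgroup Q_mul Q_one Q_inv).
  set (f := fun a => exist Q (tau a) (Q_tau a) : S).
  assert (Rf : gr_rel op pi e f).
  { split; [|split].
    - intros a b; apply sig_eq; apply R_op.
    - intros n a; apply sig_eq.
      transitivity (gpow (tau a) n); [apply R_pi | symmetry; apply (subgroup_gpow (f a))].
    - apply sig_eq; apply R_e. }
  destruct (U S f Rf) as [[psi [Hpsi Hpsi_tau]] _].
  destruct (U K tau (conj R_op (conj R_pi R_e))) as [_ Uniq].
  intro x. replace x with (proj1_sig (psi x)) by
    (apply (Uniq (fun y => proj1_sig (psi y)) (fun y => y));
     [intros u v; rewrite Hpsi | intros u v | intro a; rewrite Hpsi_tau]; reflexivity).
  apply proj2_sig.
Qed.

Lemma Gr_hom_ext (H : Group) (phi1 phi2 : K -> H) :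
  is_hom phi1 -> is_hom phi2 -> (forall a, phi1 (tau a) = phi2 (tau a)) ->
  forall x, phi1 x = phi2 x.
Proof.
  intros Hphi1 Hphi2 Htau. apply Gr_ind; [|..| exact Htau].
  - intros x y Hx Hy. rewrite Hphi1, Hphi2, Hx, Hy. reflexivity.
  - rewrite (hom_one Hphi1), (hom_one Hphi2). reflexivity.
  - intros x Hx. rewrite (hom_inv Hphi1), (hom_inv Hphi2), Hx. reflexivity.
Qed.

End GrUniversal.

Lemma gr_rel_comp (X : Type) (op : X -> X -> X) (pi : Z -> X -> X) (e : X)
  (G K : Group) (sigma : X -> G) (tau : G -> K) :
  gr_rel op pi e sigma -> gr_rel pq_op pq_pi (gone G) tau ->
  gr_rel op pi e (fun a => tau (sigma a)).
Proof.
  intros [S_op [S_pi S_e]] [R_op [R_pi R_e]]. split; [|split].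
  - intros a b; rewrite S_op; apply R_op.
  - intros n a; rewrite S_pi; apply R_pi.
  - rewrite S_e; apply R_e.
Qed.

Lemma Gr_Pq_section (X : Type) (op : X -> X -> X) (pi : Z -> X -> X) (e : X)
  (G : Group) (sigma : X -> G) (HG : IsGr op pi e sigma)
  (K : Group) (tau : G -> K) (Rtau : gr_rel pq_op pq_pi (gone G) tau)
  (eps : K -> G) (eps_hom : is_hom eps) (eps_tau : forall a, eps (tau a) = a) :
  exists s : G -> K, is_hom s /\ forall g, eps (s g) = g.
Proof.
  pose proof HG as [Rsigma U].
  destruct (U K _ (gr_rel_comp Rsigma Rtau)) as [[s [s_hom s_sigma]] _].
  exists s; split; [exact s_hom|].
  apply (Gr_hom_ext HG (phi1 := fun g => eps (s g)) (phi2 := fun g => g)).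
  - intros u v; rewrite s_hom, eps_hom; reflexivity.
  - intros u v; reflexivity.
  - intro a; rewrite s_sigma, eps_tau; reflexivity.
Qed.

Section GrPq.
Variables (G K : Group) (tau : G -> K).
Hypothesis HK : IsGr pq_op pq_pi (gone G) tau.
Variable eps : K -> G.
Hypothesis eps_hom : is_hom eps.
Hypothesis eps_tau : forall a, eps (tau a) = a.

Lemma tau_pq_op a b : tau (pq_op a b) = pq_op (tau a) (tau b).
Proof. destruct HK as [[R_op _] _]. apply R_op. Qed.

Lemma pq_op_tau x h : pq_op x (tau h) = tau (pq_op (eps x) h).
Proof.
  revert x h.
  apply (Gr_ind HK (fun x => forall h, pq_op x (tau h) = tau (pq_op (eps x) h))).
  - intros x y Hx Hy h. rewrite pq_opM, Hy, Hx, eps_hom, pq_opM. reflexivity.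
  - intro h. rewrite (hom_one eps_hom), !pq_op1. reflexivity.
  - intros x Hx h. rewrite (hom_inv eps_hom).
    rewrite <- (pq_opKV (eps x) h) at 1. rewrite <- Hx. apply pq_opK.
  - intros a h. rewrite eps_tau. symmetry; apply tau_pq_op.
Qed.

Lemma ker_central k : eps k = gone G -> forall y, gmul k y = gmul y k.
Proof.
  intro Hk. apply (Gr_ind HK (fun y => gmul k y = gmul y k)).
  - intros x y Hx Hy. rewrite gmulA, Hx, <- gmulA, Hy, gmulA. reflexivity.
  - rewrite gmul1l, gmul1r. reflexivity.
  - intros x Hx. apply commute_ginv; exact Hx.
  - intro a. rewrite <- pq_op_mulr, pq_op_tau, Hk, pq_op1. reflexivity.
Qed.

End GrPq.

Section CentralSplitExtension.
Variables (K G : Group) (eps : K -> G) (s : G -> K).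
Hypothesis eps_hom : is_hom eps.
Hypothesis s_hom : is_hom s.
Hypothesis eps_s : forall g, eps (s g) = g.
Hypothesis ker_eps_central : forall k, eps k = gone G -> forall y, gmul k y = gmul y k.

Definition ker_proj (x : K) : K := gmul (ginv (s (eps x))) x.

Lemma eps_ker_proj x : eps (ker_proj x) = gone G.
Proof. unfold ker_proj. rewrite eps_hom, (hom_inv eps_hom), eps_s, gmulVl. reflexivity. Qed.

Lemma ker_proj_hom : is_hom ker_proj.
Proof.
  intros x y. unfold ker_proj at 1.
  rewrite eps_hom, s_hom, ginvM, <- gmulA, (gmulA (ginv (s (eps x)))).
  fold (ker_proj x).
  rewrite gmulA, <- (ker_eps_central (eps_ker_proj x)), <- gmulA. reflexivity.
Qed.

Lemma section_ker_proj x : gmul (s (eps x)) (ker_proj x) = x.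
Proof. apply gmulKV. Qed.

Lemma iso_prod_kernel_of_section : iso_prod_kernel eps.
Proof.
  exists eps, ker_proj.
  split; [exact eps_hom|]. split; [exact ker_proj_hom|]. split; [exact eps_ker_proj|].
  split.
  - intros x y Ex Ey. rewrite <- (section_ker_proj x), <- (section_ker_proj y), Ex, Ey.
    reflexivity.
  - intros g k Hk. exists (gmul (s g) k).
    assert (E : eps (gmul (s g) k) = g) by (rewrite eps_hom, eps_s, Hk; apply gmul1r).
    split; [exact E|]. unfold ker_proj. rewrite E. apply gmulK.
Qed.

End CentralSplitExtension.

Theorem mainTheorem13
  (P : PowerQuandle)
  (G : Group) (sigma : P -> G)
  (HG : @IsGr P qop qpi (qe P) G sigma)
  (K : Group) (tau : G -> K)
  (HK : @IsGr G pq_op pq_pi (gone G) K tau)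
  (eps : K -> G) (Heps_hom : is_hom eps) (Heps : forall a, eps (tau a) = a) :
  iso_prod_kernel eps.
Proof.
  destruct (Gr_Pq_section HG (proj1 HK) Heps_hom Heps) as [s [s_hom eps_s]].
  exact (iso_prod_kernel_of_section Heps_hom s_hom eps_s (ker_central HK Heps_hom Heps)).
Qed.
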